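(* For integers $0\le j\le n$, $$\sum_{i=j}^n\binom{2n}{2i}B_{2n-2i}{i\brack j}=\begin{cases}0,& j<n,\\ n,& j=n.\end{cases}$$
   Context: $B_n$ is the $n$th Bernoulli number, $\frac{t}{e^t-1}=\sum_{n\ge0}B_n\frac{t^n}{n!}$. The Euler polynomials $E_n(x)$ are defined by $\frac{2e^{xt}}{e^t+1}=\sum_{n\ge0}E_n(x)\frac{t^n}{n!}$. For integers $N\ge0$, the numbers ${N\brack j}$ are defined by $\sum_{j=1}^N{N\brack j}x^{2j-1}=x^{2N}-E_{2N}(x)$ (i.e. they are the negatives of the odd-degree coefficients of $E_{2N}$), with ${N\brack j}=0$ for $j\le0$ or $j>N$. *)

From mathcomp Require Import all_boot all_order all_algebra.
Set Implicit Arguments. Unset Strict Implicit. Unset Printing Implicit Defensive.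
Import Order.TTheory GRing.Theory Num.Theory.
Local Open Scope ring_scope.

(* Bernoulli numbers B_0..B_n, from the coefficient identity of
   t = (e^t - 1) * sum_n B_n t^n/n!, i.e.
   sum_{k=0}^{n} C(n+1,k) B_k = [n = 0]. *)
Fixpoint bern_seq (n : nat) : seq rat :=
  match n with
  | 0 => [:: 1]
  | m.+1 => let s := bern_seq m in
      rcons s (- (m.+2%:R)^-1 * \sum_(k < m.+1) 'C(m.+2, k)%:R * nth 0 s k)
  end.

Definition bernoulli (n : nat) : rat := nth 0 (bern_seq n) n.

(* Euler polynomials E_0..E_n, from the coefficient identity of
   2 e^{xt} = (e^t + 1) * sum_n E_n(x) t^n/n!, i.e.
   2 x^n = E_n(x) + sum_{k=0}^{n} C(n,k) E_k(x). *)
Fixpoint euler_seq (n : nat) : seq {poly rat} :=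
  match n with
  | 0 => [:: 1]
  | m.+1 => let s := euler_seq m in
      rcons s ('X^(m.+1) - 2^-1 *: \sum_(k < m.+1) 'C(m.+1, k)%:R *: nth 0 s k)
  end.

Definition eulerE (n : nat) : {poly rat} := nth 0 (euler_seq n) n.

(* {N brack j}: sum_{j=1}^N {N brack j} x^(2j-1) = x^(2N) - E_(2N)(x);
   zero for j <= 0 or j > N. *)
Definition ebrack (N j : nat) : rat :=
  if ((0 < j) && (j <= N))%N then - (eulerE N.*2)`_(j.*2.-1) else 0.

From mathcomp Require Import all_boot all_order all_algebra.
From mathcomp Require Import ring lra zify.
From Stdlib Require Import Setoid Morphisms.
Import Order.TTheory GRing.Theory Num.Theory.
Set Implicit Arguments.
Unset Strict Implicit.
Unset Printing Implicit Defensive.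
Local Open Scope ring_scope.

(* The Euler polynomials are an Appell sequence,
   E_n(x) = sum_p C(n,p) e_(n-p) x^p with e_m = E_m(0), so that
   {i brack j} = - C(2i, 2j-1) e_(2i-2j+1).  The trinomial revision
   C(2n,2i) C(2i,2j-1) = C(2n,2j-1) C(2n-2j+1, 2i-2j+1) turns the sum into
   - C(2n,2j-1) times the odd-index part of the binomial convolution
   sum_k C(m,k) e_k B_(m-k), m = 2(n-j)+1.  On generating functions this
   convolution is 2/(e^t+1) * t/(e^t-1) = 2t/(e^(2t)-1), so it equals 2^m B_m.
   As 2/(e^t+1) - 1 and t/(e^t-1) + t/2 are odd functions, e_k = 0 for even
   k > 0 and B_m = 0 for odd m > 1, while e_0 = 1 and B_1 = -1/2; hence the
   odd-index part is (2^m - 1) B_m, which is -1/2 for m = 1 and 0 otherwise.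
   Power series are represented by polynomials truncated below degree N and
   compared modulo X^N. *)

Lemma size_bern_seq n : size (bern_seq n) = n.+1.
Proof. by elim: n => //= n IH; rewrite size_rcons IH. Qed.

Lemma nth_bern_seq n m : (m <= n)%N -> nth 0 (bern_seq n) m = bernoulli m.
Proof.
elim: n => [|n IH]; first by rewrite leqn0 => /eqP->.
rewrite leq_eqVlt => /orP[/eqP->//|lt_mn].
by rewrite /= nth_rcons size_bern_seq lt_mn IH.
Qed.

Lemma bernoulli_sum n : \sum_(k < n) 'C(n, k)%:R * bernoulli k = (n == 1)%:R.
Proof.
case: n => [|[|m]]; first by rewrite big_ord0.
  by rewrite big_ord1 mul1r.
rewrite big_ord_recr /= {2}/bernoulli /= nth_rcons size_bern_seq ltnn eqxx.
under [in X in _ + _ * X]eq_bigr => k _ do rewrite nth_bern_seq ?(ltnSE (ltn_ord k)) //.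
by rewrite binSn mulrA mulrN divff ?pnatr_eq0 // mulN1r subrr.
Qed.

Lemma size_euler_seq n : size (euler_seq n) = n.+1.
Proof. by elim: n => //= n IH; rewrite size_rcons IH. Qed.

Lemma nth_euler_seq n m : (m <= n)%N -> nth 0 (euler_seq n) m = eulerE m.
Proof.
elim: n => [|n IH]; first by rewrite leqn0 => /eqP->.
rewrite leq_eqVlt => /orP[/eqP->//|lt_mn].
by rewrite /= nth_rcons size_euler_seq lt_mn IH.
Qed.

Lemma eulerE_rec m :
  eulerE m.+1 = 'X^(m.+1) - 2^-1 *: \sum_(k < m.+1) 'C(m.+1, k)%:R *: eulerE k.
Proof.
rewrite {1}/eulerE /= nth_rcons size_euler_seq ltnn eqxx.
congr (_ - _ *: _); apply: eq_bigr => k _; rewrite nth_euler_seq //; exact: ltnSE (ltn_ord k).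
Qed.

Definition euler_at0 (m : nat) : rat := (eulerE m)`_0.

Lemma euler_at0_sum m :
  \sum_(k < m) 'C(m, k)%:R * euler_at0 k = 2 * (m == 0)%:R - 2 * euler_at0 m.
Proof.
case: m => [|m]; first by rewrite big_ord0 /euler_at0 coefC /=; ring.
rewrite /euler_at0 eulerE_rec coefB coefXn coefZ coef_sum /=.
under [in RHS]eq_bigr => k _ do rewrite coefZ.
by set s := \sum_(_ < _) _; field.
Qed.

Lemma mul_bin_trinomial a c i :
  ('C(a, i + c) * 'C(i + c, c) = 'C(a, c) * 'C(a - c, i))%N.
Proof.
have [le_a|lt_a] := leqP (i + c) a; last first.
  rewrite bin_small // mul0n; have [le_ca|lt_ac] := leqP c a.
    by rewrite (@bin_small (a - c)) ?muln0 //; lia.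
  by rewrite (@bin_small a c).
have fact_pos : (0 < c`! * (i`! * (a - (i + c))`!))%N by rewrite !muln_gt0 !fact_gt0.
apply/eqP; rewrite -(eqn_pmul2r fact_pos); apply/eqP.
transitivity a`!; first by rewrite -(bin_fact le_a) -(bin_fact (leq_addl i c)) addnK; ring.
have le_ia : (i <= a - c)%N by lia.
rewrite -(bin_fact (leq_trans (leq_addl i c) le_a)) -(bin_fact le_ia).
by rewrite (_ : a - c - i = a - (i + c))%N; [ring | lia].
Qed.

Lemma big_ord_double (V : nmodType) m (F : nat -> V) :
  \sum_(k < m.*2) F k = \sum_(q < m) F q.*2 + \sum_(q < m) F q.*2.+1.
Proof.
elim: m => [|m IH]; first by rewrite !big_ord0 addr0.
by rewrite doubleS !big_ord_recr /= IH -addrA addrACA.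
Qed.

Lemma coef_eulerE n p : (eulerE n)`_p = 'C(n, p)%:R * euler_at0 (n - p).
Proof.
elim/ltn_ind: n p => -[|m] IH p.
  by rewrite /euler_at0 coef1; case: p => [|p] /=; rewrite ?mul0r ?mul1r ?coef1.
rewrite eulerE_rec coefB coefXn coefZ coef_sum.
under eq_bigr => k _ do rewrite coefZ (IH k (ltn_ord k)).
have -> : \sum_(k < m.+1) 'C(m.+1, k)%:R * ('C(k, p)%:R * euler_at0 (k - p))
    = 'C(m.+1, p)%:R * \sum_(i < m.+1 - p) 'C(m.+1 - p, i)%:R * euler_at0 i.
  transitivity (\sum_(p <= k < m.+1) 'C(m.+1, k)%:R * ('C(k, p)%:R * euler_at0 (k - p))).
    rewrite big_geq_mkord big_mkcondr; apply: eq_bigr => k _.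
    by case: leqP => // lt_kp; rewrite (@bin_small k p) // mul0r mulr0.
  rewrite -{1}[p]add0n big_addn big_mkord mulr_sumr; apply: eq_bigr => i _.
  by rewrite addnK mulrA -natrM mul_bin_trinomial natrM mulrA.
have bin_top : 'C(m.+1, p)%:R * ((m.+1 - p)%N == 0)%:R = (p == m.+1)%:R :> rat.
  rewrite -natrM; congr _%:R.
  case: (ltngtP p m.+1) => [lt_p|lt_p|->]; last by rewrite subnn binn.
    by rewrite subn_eq0 leqNgt lt_p muln0.
  by rewrite bin_small.
by rewrite euler_at0_sum -bin_top; field.
Qed.

Definition eqmodX {F : fieldType} N (p q : {poly F}) : Prop := 'X^N %| p - q.

Notation "p = q %[modX N ]" := (eqmodX N p q) : ring_scope.

Section CongruenceModXn.

Variable F : fieldType.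
Implicit Types p q Q : {poly F}.

Lemma eqmodXP N p q : p = q %[modX N] <-> forall i, (i < N)%N -> p`_i = q`_i.
Proof.
rewrite /eqmodX; split => [/modp_eq0P | coef_pq].
  rewrite -Pdiv.IdomainMonic.take_poly_modp => /polyP take_pq i lt_iN.
  apply/eqP; rewrite -subr_eq0 -coefB.
  by have := take_pq i; rewrite coef_take_poly lt_iN coef0 => ->.
apply/modp_eq0P; rewrite -Pdiv.IdomainMonic.take_poly_modp; apply/polyP => i.
by rewrite coef_take_poly coef0 coefB; case: ifP => // /coef_pq ->; rewrite subrr.
Qed.

#[export] Instance eqmodX_equiv N : Equivalence (@eqmodX F N).
Proof.
split.
- by move=> p; rewrite /eqmodX subrr dvdp0.
- by move=> p q pq; rewrite /eqmodX -opprB -mulN1r dvdp_mull.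
- by move=> p q r pq qr; rewrite /eqmodX -(subrKA q) dvdp_add.
Qed.

#[export] Instance eqmodX_add N :
  Proper (@eqmodX F N ==> eqmodX N ==> eqmodX N) (@GRing.add {poly F}).
Proof.
by move=> p p' pp' q q' qq'; rewrite /eqmodX opprD addrACA dvdp_add.
Qed.

#[export] Instance eqmodX_opp N : Proper (@eqmodX F N ==> eqmodX N) (@GRing.opp {poly F}).
Proof. by move=> p p' pp'; rewrite /eqmodX -opprD -mulN1r dvdp_mull. Qed.

#[export] Instance eqmodX_mul N :
  Proper (@eqmodX F N ==> eqmodX N ==> eqmodX N) (@GRing.mul {poly F}).
Proof.
move=> p p' pp' q q' qq'; rewrite /eqmodX.
have -> : p * q - p' * q' = (p - p') * q + p' * (q - q') by ring.
exact: dvdp_add (dvdp_mulr _ pp') (dvdp_mull _ qq').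
Qed.

Lemma eqmodX_comp_scale c N p q :
  p = q %[modX N] -> p \Po (c *: 'X) = q \Po (c *: 'X) %[modX N].
Proof.
move=> /(dvdp_comp_poly (c *: 'X)); rewrite /eqmodX -comp_polyB.
apply: dvdp_trans; rewrite rmorphXn /= comp_polyX -mul_polyC exprMn.
exact: dvdp_mull.
Qed.

Lemma eqmodX_cancel N k p q Q :
  (forall i, (i < k)%N -> Q`_i = 0) -> Q`_k != 0 ->
  p * Q = q * Q %[modX N + k] -> p = q %[modX N].
Proof.
move=> Q_low Qk; have Q_eq : Q = drop_poly k Q * 'X^k.
  rewrite -[LHS](poly_take_drop k) [take_poly k Q](_ : _ = 0) ?add0r //.
  by apply/polyP => i; rewrite coef_take_poly coef0; case: ifP => // /Q_low.
rewrite /eqmodX -mulrBl Q_eq mulrA exprD dvdp_mul2r ?expf_neq0 ?polyX_eq0 //.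
rewrite Gauss_dvdpl // coprimep_expl // coprimep_sym coprimepX rootE horner_coef0.
by rewrite coef_drop_poly.
Qed.

End CongruenceModXn.

Section TruncatedEGF.

Variable R : numFieldType.
Implicit Types (a b : nat -> R) (p q : {poly R}).

Definition binconv a b n : R := \sum_(k < n.+1) 'C(n, k)%:R * a k * b (n - k)%N.

Definition egf a N : {poly R} := \poly_(i < N) (a i / i`!%:R).

Definition egf_exp c N : {poly R} := egf (fun n => c ^+ n) N.

Lemma coef_egf a N i : (egf a N)`_i = if (i < N)%N then a i / i`!%:R else 0.
Proof. exact: coef_poly. Qed.

Lemma natr_fact_neq0 n : n`!%:R != 0 :> R.
Proof. by rewrite pnatr_eq0 -lt0n fact_gt0. Qed.

Lemma egf_eqmodX_coef a b M N i :
  egf a M = egf b M %[modX N] -> (i < M)%N -> (i < N)%N -> a i = b i.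
Proof.
move=> /eqmodXP ab lt_iM lt_iN; have := ab i lt_iN; rewrite !coef_egf lt_iM.
by move/(mulIf (invr_neq0 (natr_fact_neq0 i))).
Qed.

Lemma egfM a b N : egf a N * egf b N = egf (binconv a b) N %[modX N].
Proof.
apply/eqmodXP => n lt_nN; rewrite coefM coef_egf lt_nN /binconv mulr_suml.
apply: eq_bigr => -[k /= lt_kn] _.
rewrite !coef_egf (leq_trans lt_kn lt_nN) (leq_ltn_trans (leq_subr k n) lt_nN).
rewrite -(bin_fact (ltnSE lt_kn)) !natrM.
have bin_neq0 : 'C(n, k)%:R != 0 :> R by rewrite pnatr_eq0 -lt0n bin_gt0 -ltnS.
by field; rewrite bin_neq0 !natr_fact_neq0.
Qed.

Lemma egfD a b N : egf (fun n => a n + b n) N = egf a N + egf b N.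
Proof. by apply/polyP => i; rewrite coefD !coef_egf; case: ifP; rewrite ?mulrDl ?addr0. Qed.

Lemma egf_exp0 N : egf_exp 0 N = 1 %[modX N].
Proof.
apply/eqmodXP => i lt_iN; rewrite coef_egf lt_iN coef1 expr0n.
by case: i {lt_iN} => [|i]; rewrite ?mul0r ?divr1.
Qed.

Lemma egf_expM c d N : egf_exp c N * egf_exp d N = egf_exp (c + d) N %[modX N].
Proof.
rewrite egfM; apply/eqmodXP => n lt_nN; rewrite !coef_egf lt_nN /binconv addrC exprDn.
by congr (_ * _); apply: eq_bigr => k _; rewrite -mulr_natl; ring.
Qed.

Lemma egf_comp_scale c a N :
  egf a N \Po (c *: 'X) = egf (fun n => c ^+ n * a n) N.
Proof.
rewrite /egf !poly_def raddf_sum /=; apply: eq_bigr => i _.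
by rewrite comp_polyZ rmorphXn /= comp_polyX exprZn scalerA mulrC mulrA.
Qed.

Lemma egf_exp_comp c d N : egf_exp d N \Po (c *: 'X) = egf_exp (c * d) N.
Proof.
by rewrite egf_comp_scale; apply/polyP => i; rewrite !coef_egf exprMn.
Qed.

Lemma binconv_exp1 a n :
  binconv a (fun k => 1 ^+ k) n = \sum_(k < n) 'C(n, k)%:R * a k + a n.
Proof.
rewrite /binconv big_ord_recr /= binn subnn mul1r expr1n mulr1.
by congr (_ + _); apply: eq_bigr => k _; rewrite expr1n mulr1.
Qed.

End TruncatedEGF.

Lemma egf_bernoulli N : egf bernoulli N * (egf_exp 1 N - 1) = 'X %[modX N].
Proof.
rewrite mulrBr mulr1 egfM; apply/eqmodXP => n lt_nN.
rewrite coefB !coef_egf lt_nN binconv_exp1 bernoulli_sum -mulrBl addrK coefX.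
by case: eqP => [->|_]; rewrite ?mul0r // divr1.
Qed.

Lemma egf_euler_at0 N : egf euler_at0 N * (egf_exp 1 N + 1) = 2 %[modX N].
Proof.
rewrite mulrDr mulr1 egfM; apply/eqmodXP => n lt_nN.
rewrite coefD !coef_egf lt_nN binconv_exp1 euler_at0_sum -mulrDl -polyC_natr coefC.
by case: n {lt_nN} => [|n]; rewrite ?divr1 /=; ring.
Qed.

Lemma egf_bernoulli_scale c N :
  egf (fun n => c ^+ n * bernoulli n) N * (egf_exp c N - 1) = c *: 'X %[modX N].
Proof.
have := eqmodX_comp_scale c (egf_bernoulli N).
rewrite comp_polyM comp_polyB -polyC1 comp_polyC comp_polyX.
by rewrite egf_comp_scale egf_exp_comp mulr1.
Qed.

Lemma egf_euler_at0_scale c N :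
  egf (fun n => c ^+ n * euler_at0 n) N * (egf_exp c N + 1) = 2 %[modX N].
Proof.
have := eqmodX_comp_scale c (egf_euler_at0 N).
rewrite comp_polyM comp_polyD -polyC1 -polyC_natr !comp_polyC.
by rewrite egf_comp_scale egf_exp_comp mulr1.
Qed.

Lemma binconv_euler_at0_bernoulli n :
  binconv euler_at0 bernoulli n = 2 ^+ n * bernoulli n.
Proof.
(* E(t) B(t) (e^(2t) - 1) = E(t) (e^t + 1) * B(t) (e^t - 1) = 2t
   = B(2t) (e^(2t) - 1), and e^(2t) - 1 can be cancelled. *)
pose Q := egf_exp (2 : rat) n.+2 - 1.
have Q_coef0 : Q`_0 = 0 by rewrite coefB coef1 coef_egf /= divr1 subrr.
have Q_coef1 : Q`_1 != 0 by rewrite coefB coef1 coef_egf /=.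
apply: (@egf_eqmodX_coef _ (binconv euler_at0 bernoulli)
          (fun k => 2 ^+ k * bernoulli k) n.+2 n.+1) => //.
apply: (@eqmodX_cancel _ _ 1 _ _ Q) => [[]//|//|].
rewrite addn1 /Q -egfM egf_bernoulli_scale.
rewrite -[egf_exp 2 _]/(egf_exp (1 + 1) n.+2) -egf_expM.
set E := egf euler_at0 _; set B := egf bernoulli _; set O := egf_exp 1 _.
rewrite (_ : E * B * (O * O - 1) = E * (O + 1) * (B * (O - 1))); last by ring.
rewrite egf_euler_at0 egf_bernoulli -mul_polyC polyC_natr; reflexivity.
Qed.

Lemma bernoulli_sign n : (-1) ^+ n * bernoulli n = bernoulli n + (n == 1)%:R.
Proof.
(* Substituting -t for t in B(t) (e^t - 1) = t and using e^(-t) e^t = 1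
   gives B(-t) (e^t - 1) = t e^t = (B(t) + t) (e^t - 1). *)
pose Q := egf_exp (1 : rat) n.+2 - 1.
have Q_coef0 : Q`_0 = 0 by rewrite coefB coef1 coef_egf /= divr1 subrr.
have Q_coef1 : Q`_1 != 0 by rewrite coefB coef1 coef_egf /=.
apply: (@egf_eqmodX_coef _ (fun k => (-1) ^+ k * bernoulli k)
          (fun k => bernoulli k + (k == 1)%:R) n.+2 n.+1) => //.
apply: (@eqmodX_cancel _ _ 1 _ _ Q) => [[]//|//|].
have egf_delta1 : egf (fun k => (k == 1)%:R : rat) n.+2 = 'X %[modX n.+2].
  apply/eqmodXP => i lt_i; rewrite coef_egf lt_i coefX.
  by case: eqP => [->|_]; rewrite ?mul0r ?divr1.
rewrite addn1 /Q egfD egf_delta1 mulrDl egf_bernoulli.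
set B' := egf _ _; set O := egf_exp 1 _; pose T := egf_exp (-1 : rat) n.+2.
rewrite (_ : B' * (O - 1) = - (B' * (T - 1)) * O + B' * (T * O - 1)); last by ring.
rewrite egf_bernoulli_scale egf_expM addNr egf_exp0 subrr mulr0 addr0 scaleN1r opprK.
rewrite (_ : 'X + 'X * (O - 1) = 'X * O); [reflexivity | ring].
Qed.

Lemma euler_at0_sign n : (-1) ^+ n * euler_at0 n = 2 * (n == 0)%:R - euler_at0 n.
Proof.
(* As above: E(-t) (e^t + 1) = 2 e^t = (2 - E(t)) (e^t + 1). *)
pose Q := egf_exp (1 : rat) n.+1 + 1.
have Q_coef0 : Q`_0 != 0 by rewrite coefD coef1 coef_egf /=.
apply: (@egf_eqmodX_coef _ (fun k => (-1) ^+ k * euler_at0 k)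
          (fun k => 2 * (k == 0)%:R - euler_at0 k) n.+1 n.+1) => //.
apply: (@eqmodX_cancel _ _ 0 _ _ Q) => [[]//|//|].
have egf_sub : egf (fun k => 2 * (k == 0)%:R - euler_at0 k) n.+1
               = 2 - egf euler_at0 n.+1 %[modX n.+1].
  apply/eqmodXP => i lt_i; rewrite coefB !coef_egf lt_i -polyC_natr coefC.
  by case: i {lt_i} => [|i]; rewrite ?divr1 //= mulr0 !sub0r mulNr.
rewrite addn0 /Q egf_sub mulrBl egf_euler_at0.
set E' := egf _ _; set O := egf_exp 1 _; pose T := egf_exp (-1 : rat) n.+1.
rewrite (_ : E' * (O + 1) = E' * (T + 1) * O - E' * (T * O - 1)); last by ring.
rewrite egf_euler_at0_scale egf_expM addNr egf_exp0 subrr mulr0 subr0.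
rewrite (_ : 2 * (O + 1) - 2 = 2 * O); [reflexivity | ring].
Qed.

Lemma bernoulli1 : bernoulli 1 = - 2^-1.
Proof. by have := bernoulli_sign 1; rewrite expr1 mulN1r /= => ?; lra. Qed.

Lemma bernoulli_odd r : (0 < r)%N -> bernoulli r.*2.+1 = 0.
Proof.
move=> r_gt0; have := bernoulli_sign r.*2.+1.
by rewrite -signr_odd /= odd_double expr1 mulN1r eqSS double_eq0 gtn_eqF // addr0 => ?; lra.
Qed.

Lemma euler_at0_even q : (0 < q)%N -> euler_at0 q.*2 = 0.
Proof.
move=> q_gt0; have := euler_at0_sign q.*2.
by rewrite -signr_odd odd_double expr0 mul1r double_eq0 gtn_eqF // mulr0 sub0r => ?; lra.
Qed.

Lemma sum_odd_euler_at0_bernoulli r :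
  \sum_(q < r.+1) 'C(r.*2.+1, q.*2.+1)%:R * euler_at0 q.*2.+1
                  * bernoulli (r.*2.+1 - q.*2.+1) = - 2^-1 * (r == 0)%:R.
Proof.
have := binconv_euler_at0_bernoulli r.*2.+1.
rewrite /binconv -doubleS (@big_ord_double _ _ (fun k =>
  'C(r.*2.+1, k)%:R * euler_at0 k * bernoulli (r.*2.+1 - k))).
rewrite big_ord_recl big1 => [|q _]; last first.
  by rewrite euler_at0_even // mulr0 mul0r.
rewrite bin0 /euler_at0 coef1 mul1r subn0 addr0 -/euler_at0.
case: r => [|r]; first by rewrite bernoulli1 /= => ?; lra.
by rewrite bernoulli_odd // mulr0 add0r.
Qed.

Lemma ebrack_shift j q :
  ebrack (q + j.+1) j.+1 = - 'C((q + j.+1).*2, j.*2.+1)%:R * euler_at0 q.*2.+1.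
Proof.
rewrite /ebrack leq_addl coef_eulerE mulNr.
by rewrite (_ : (q + j.+1).*2 - j.*2.+1 = q.*2.+1)%N //; lia.
Qed.

Lemma sum_bernoulli_ebrack j r (n := (j.+1 + r)%N) :
  \sum_(j.+1 <= i < n.+1) 'C(n.*2, i.*2)%:R * bernoulli (n.*2 - i.*2) * ebrack i j.+1
  = - 'C(n.*2, j.*2.+1)%:R * \sum_(q < r.+1) 'C(r.*2.+1, q.*2.+1)%:R
                             * euler_at0 q.*2.+1 * bernoulli (r.*2.+1 - q.*2.+1).
Proof.
rewrite -{1}[j.+1]add0n big_addn big_mkord (_ : n.+1 - j.+1 = r.+1)%N; last by lia.
rewrite mulr_sumr; apply: eq_bigr => q _; rewrite ebrack_shift.
have bin_eq : ('C(n.*2, (q + j.+1).*2) * 'C((q + j.+1).*2, j.*2.+1)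
               = 'C(n.*2, j.*2.+1) * 'C(r.*2.+1, q.*2.+1))%N.
  rewrite (_ : (q + j.+1).*2 = q.*2.+1 + j.*2.+1)%N ?mul_bin_trinomial; last by lia.
  by congr (_ * 'C(_, _))%N; lia.
rewrite (_ : n.*2 - (q + j.+1).*2 = r.*2.+1 - q.*2.+1)%N; last by lia.
transitivity (- ('C(n.*2, (q + j.+1).*2) * 'C((q + j.+1).*2, j.*2.+1))%:R
              * euler_at0 q.*2.+1 * bernoulli (r.*2.+1 - q.*2.+1)).
  by rewrite natrM; ring.
by rewrite bin_eq natrM; ring.
Qed.

Theorem lemma5p2 (n j : nat) : (j <= n)%N ->
  \sum_(j <= i < n.+1) 'C(n.*2, i.*2)%:R * bernoulli (n.*2 - i.*2) * ebrack i j
  = (if (j < n)%N then 0 else n%:R).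
Proof.
case: j => [|j] le_jn.
  by rewrite big1 => [|i _]; [case: n le_jn | rewrite /ebrack mulr0].
rewrite -(subnKC le_jn) sum_bernoulli_ebrack sum_odd_euler_at0_bernoulli.
case: (n - j.+1)%N => [|r]; last by rewrite /= mulr0n !mulr0 ifT //; lia.
rewrite addn0 ltnn /= (_ : 'C(_, _) = j.+1 * 2)%N; last by rewrite doubleS binSn; lia.
by rewrite natrM; field.
Qed.
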